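(* For every $r\in(0,\tfrac12]$ there is a constant $c_r>0$ such that the following holds. For every integer $N\ge 2$ and every ORN design on $N$ nodes that guarantees throughput $r$, the maximum latency $L_{\max}$ of the design satisfies \[ L_{\max}\;\ge\; c_r\, h\left[(\varepsilon N)^{1/h}+N^{1/(h+1)}\right] \;=\; c_r\,L^*(r,N), \] where $h=\lfloor \frac{1}{2r}\rfloor$ and $\varepsilon=h+1-\frac{1}{2r}$.
   Context: Nodes are $[N]=\{1,\dots,N\}$. A connection schedule of size $N$ and period $T\ge1$ is a sequence of permutations $\pi_0,\dots,\pi_{T-1}$ of $[N]$; write $\pi_t=\pi_{t \bmod T}$ for all $t\in\mathbb Z$. Its virtual topology is the directed graph $G$ with vertex set $[N]\times\mathbb Z$ whose edges are the virtual edges $(i,t)\to(i,t+1)$ and the physical edges $(i,t)\to(\pi_t(i),t+1)$, for all $i\in[N]$, $t\in\mathbb Z$. The latency of a finite directed path in $G$ is its number of edges. For $a,b\in[N]$, $t\in\mathbb Z$, $\mathcal P(a,b,t)$ is the set of paths in $G$ from $(a,t)$ to some vertex $(b,t')$, and $\mathcal P$ is the set of all paths. A flow is a function $f:\mathcal P\to[0,\infty)$; the load on an edge $e$ is $F(f,e)=\sum_{P\ni e}f(P)$; $f$ is feasible if $F(f,e)\le 1$ for every physical edge $e$. An oblivious routing scheme $R$ assigns to each $(a,b,t)\in[N]\times[N]\times\mathbb Z$ a flow $R_{a,b,t}$ supported on $\mathcal P(a,b,t)$ with $\sum_P R_{a,b,t}(P)=1$, which is periodic: $R_{a,b,t+T}$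 is obtained from $R_{a,b,t}$ by shifting every path by $T$ in the time coordinate. An ORN design on $N$ nodes is a connection schedule together with an oblivious routing scheme on its virtual topology; its maximum latency is the maximum latency of a path $P$ with $R_{a,b,t}(P)>0$ for some $a,b,t$. A demand function $D$ assigns to each $t\in\mathbb Z$ an $N\times N$ matrix $D(t)$ with nonnegative entries $D(t,a,b)$; it requests throughput equal to the supremum over $t$ of the maximum row sum or column sum of $D(t)$. The induced flow is $f(R,D)=\sum_{a,b,t}D(t,a,b)R_{a,b,t}$. The design guarantees throughput $r$ if $f(R,D)$ is feasible for every demand function $D$ requesting throughput at most $r$. For $r\in(0,\frac12]$, $(h,\varepsilon)$ denotes the unique solution in $\mathbb N\times(0,1]$ of $\frac1{2r}=h+1-\varepsilon$ (equivalently $h=\lfloor\frac1{2r}\rfloor$, $\varepsilon=h+1-\frac1{2r}$), and $L^*(r,N)=h\left(N^{1/(h+1)}+(\varepsilon N)^{1/h}\right)$. *)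

From HB Require Import structures.
From mathcomp Require Import all_boot all_order all_algebra all_fingroup.
From mathcomp Require Import all_classical all_reals all_analysis.
Set Implicit Arguments. Unset Strict Implicit. Unset Printing Implicit Defensive.
Import Order.TTheory GRing.Theory Num.Theory.
Local Open Scope ring_scope.
Local Open Scope classical_set_scope.

(* Nodes are 'I_N (i.e. {0,..,N-1} instead of {1,..,N}); times are int. *)
Definition vertex (N : nat) := ('I_N * int)%type.

(* A finite directed path: its first vertex and the list of subsequent vertices. *)
Definition vpath (N : nat) := (vertex N * seq (vertex N))%type.

Section ORN.
Variable N : nat.

Definition sched_period (sched : seq {perm 'I_N}) : nat := size sched.

Definition pi_t (sched : seq {perm 'I_N}) (t : int) : {perm 'I_N} :=
  nth 1%g sched `|(t %% (size sched)%:Z)%Z|%N.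

Definition is_edge (sched : seq {perm 'I_N}) (u v : vertex N) : bool :=
  (v.2 == u.2 + 1) && ((v.1 == u.1) || (v.1 == pi_t sched u.2 u.1)).

Definition is_phys (sched : seq {perm 'I_N}) (u v : vertex N) : bool :=
  (v.2 == u.2 + 1) && (v.1 == pi_t sched u.2 u.1).

Definition is_path (sched : seq {perm 'I_N}) (P : vpath N) : bool :=
  path (is_edge sched) P.1 P.2.

Definition latency (P : vpath N) : nat := size P.2.

Definition path_edges (P : vpath N) : seq (vertex N * vertex N) :=
  zip (P.1 :: P.2) P.2.

Definition path_last (P : vpath N) : vertex N := last P.1 P.2.

Definition paths_from_to (sched : seq {perm 'I_N}) (a b : 'I_N) (t : int)
  (P : vpath N) : bool :=
  [&& is_path sched P, P.1 == (a, t) & (path_last P).1 == b].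

Definition shift_vertex (s : int) (v : vertex N) : vertex N := (v.1, v.2 + s).
Definition shift_path (s : int) (P : vpath N) : vpath N :=
  (shift_vertex s P.1, map (shift_vertex s) P.2).

Variable R : realType.

Definition load (sched : seq {perm 'I_N}) (f : vpath N -> \bar R)
  (e : vertex N * vertex N) : \bar R :=
  \esum_(P in [set P | is_path sched P /\ e \in path_edges P]) f P.

Definition feasible (sched : seq {perm 'I_N}) (f : vpath N -> \bar R) : Prop :=
  forall u v : vertex N, is_phys sched u v -> (load sched f (u, v) <= 1)%E.

Definition is_ORN_design (sched : seq {perm 'I_N})
  (Rt : 'I_N -> 'I_N -> int -> vpath N -> R) : Prop :=
  [/\ (0 < size sched)%N,
      (forall a b t P, 0 <= Rt a b t P),
      (forall a b t P, Rt a b t P != 0 -> paths_from_to sched a b t P),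
      (forall a b t, \esum_(P in [set: vpath N]) (Rt a b t P)%:E = 1%E) &
      (forall a b t P,
          Rt a b (t + (size sched)%:Z) (shift_path (size sched)%:Z P)
          = Rt a b t P)].

Definition demand_le (D : int -> 'I_N -> 'I_N -> R) (r : R) : Prop :=
  [/\ (forall t a b, 0 <= D t a b),
      (forall t a, \sum_(b < N) D t a b <= r) &
      (forall t b, \sum_(a < N) D t a b <= r)].

Definition induced_flow (Rt : 'I_N -> 'I_N -> int -> vpath N -> R)
  (D : int -> 'I_N -> 'I_N -> R) (P : vpath N) : \bar R :=
  \esum_(x in [set: int * ('I_N * 'I_N)])
     (D x.1 x.2.1 x.2.2 * Rt x.2.1 x.2.2 x.1 P)%:E.

Definition guarantees_throughput (sched : seq {perm 'I_N})
  (Rt : 'I_N -> 'I_N -> int -> vpath N -> R) (r : R) : Prop :=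
  forall D, demand_le D r -> feasible sched (induced_flow Rt D).

(* L bounds the latency of every path used by the routing scheme;
   the maximum latency L_max is the least such L. *)
Definition latency_bounded_by (Rt : 'I_N -> 'I_N -> int -> vpath N -> R)
  (L : nat) : Prop :=
  forall a b t P, 0 < Rt a b t P -> (latency P <= L)%N.

End ORN.

Definition h_of {R : realType} (r : R) : nat := Num.truncn (1 / (2 * r)).
Definition eps_of {R : realType} (r : R) : R := (h_of r)%:R + 1 - 1 / (2 * r).

Definition Lstar {R : realType} (r : R) (N : nat) : R :=
  (h_of r)%:R * ((N%:R) `^ ((h_of r)%:R + 1)^-1
                 + (eps_of r * N%:R) `^ ((h_of r)%:R)^-1).

From HB Require Import structures.
From mathcomp Require Import all_boot all_order all_algebra all_fingroup.
From mathcomp Require Import all_classical all_reals all_analysis.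
From mathcomp Require Import zify ring lra.
Import Order.TTheory GRing.Theory Num.Theory.

(* Fix a window of W + L time steps and, for every physical edge e leaving
   a node at a time of the window, the demand that spreads rate lam * r
   uniformly over all pairs and concentrates rate (1 - lam) * r on A_e x B_e,
   where A_e (resp. B_e) is the set of nodes that can reach e (resp. be
   reached from e) along the schedule with at most h physical hops within L
   steps.  A hop pattern is fixed by at most h positions among L + 1, so
   |A_e|, |B_e| <= (L+1)^h and this demand requests throughput r; hence every
   such edge carries load at most 1.
   A routed path of latency at most L between distinct nodes either takes more
   than 2h + 1 physical edges, each carrying uniform demand, or has a median
   hop with at most h hops on each side, whose edge e sees the pair in
   A_e x B_e.  Summing loads over the N (W + L) edges of the window and
   choosing lam and W / L well forces N <= C_r L^h, i.e. L >= c_r N^(1/h),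
   and L*(r, N) <= 2 h N^(1/h). *)

Set Implicit Arguments. Unset Strict Implicit. Unset Printing Implicit Defensive.
Local Open Scope ring_scope.

Section Walk.
Variables (N : nat) (sched : seq {perm 'I_N}).

Fixpoint walk_perm (t : int) (n : nat) (S : nat -> bool) : {perm 'I_N} :=
  if n is n'.+1 then
    (walk_perm t n' S * (if S n' then pi_t sched (t + n'%:Z) else 1))%g
  else 1%g.

Lemma walk_permS t n S x :
  walk_perm t n.+1 S x =
  (if S n then pi_t sched (t + n%:Z) else 1%g) (walk_perm t n S x).
Proof. by rewrite /= permM. Qed.

Lemma eq_walk_perm t n S S' :
  (forall j, (j < n)%N -> S j = S' j) -> walk_perm t n S = walk_perm t n S'.
Proof.
elim: n => [|n IHn] eqS //=.
by rewrite IHn ?eqS // => j ltjn; apply: eqS; lia.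
Qed.

Lemma walk_permD t n m S x :
  walk_perm t (n + m) S x =
  walk_perm (t + n%:Z) m (fun j => S (n + j)%N) (walk_perm t n S x).
Proof.
elim: m => [|m IHm]; first by rewrite addn0 /= perm1.
rewrite addnS !walk_permS IHm; congr ((if _ then pi_t _ _ else _) _).
by rewrite PoszD addrA.
Qed.

Lemma walk_perm_idle t n m S x :
  (forall j, (n <= j < n + m)%N -> ~~ S j) ->
  walk_perm t (n + m) S x = walk_perm t n S x.
Proof.
elim: m => [|m IHm] idle; first by rewrite addn0.
rewrite addnS walk_permS IHm; last by move=> j Hj; apply: idle; lia.
by rewrite (negbTE (idle (n + m)%N _)) ?perm1 //; lia.
Qed.

Definition is_hop (P : vpath N) (j : nat) : bool :=
  (j < size P.2)%N &&
  is_phys sched (nth P.1 (P.1 :: P.2) j) (nth P.1 (P.1 :: P.2) j.+1).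

Lemma path_nth_walk (P : vpath N) a t :
  is_path sched P -> P.1 = (a, t) -> forall i, (i <= size P.2)%N ->
  nth P.1 (P.1 :: P.2) i = (walk_perm t i (is_hop P) a, t + i%:Z).
Proof.
case: P => v l /= Ppath v_at; subst v.
elim=> [|i IHi] lei; first by rewrite /= perm1 addr0.
move/(pathP (a, t)): (Ppath) => /(_ i lei).
have hop_i : is_hop (a, t, l) i =
  is_phys sched (nth (a, t) ((a, t) :: l) i) (nth (a, t) l i).
  by rewrite /is_hop /= lei.
rewrite walk_permS hop_i IHi; last lia.
set x := walk_perm t i _ a; rewrite [nth _ (_ :: l) i.+1]/=.
case: (nth (a, t) l i) => y ty.
rewrite /is_edge /is_phys /= => /andP[/eqP -> edge_xy].
rewrite eqxx /= -addrA -(PoszD i 1) addn1.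
case: eqP => [->|not_hop] //.
by move: edge_xy; rewrite perm1 => /orP[/eqP ->|/eqP /not_hop].
Qed.

Lemma mem_path_edges_nth (P : vpath N) i : (i < size P.2)%N ->
  (nth P.1 (P.1 :: P.2) i, nth P.1 (P.1 :: P.2) i.+1) \in path_edges P.
Proof.
move=> lti; have lti' : (i < size (zip (P.1 :: P.2) P.2))%N.
  by rewrite size_zip /=; lia.
by have := mem_nth (P.1, P.1) lti'; rewrite nth_zip_cond lti'.
Qed.

Lemma path_lastE (P : vpath N) : path_last P = nth P.1 (P.1 :: P.2) (size P.2).
Proof. by rewrite /path_last (last_nth P.1). Qed.

End Walk.

Lemma count_iotaD (H : nat -> bool) n m :
  count H (iota 0 (n + m)) =
  (count H (iota 0 n) + count (fun j => H (n + j)%N) (iota 0 m))%N.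
Proof. by rewrite iotaD count_cat add0n -{2}[n]addn0 iotaDl count_map. Qed.

Lemma count_iotaS (H : nat -> bool) n :
  count H (iota 0 n.+1) = (count H (iota 0 n) + H n)%N.
Proof. by rewrite -addn1 count_iotaD /= addn0 addn0. Qed.

Lemma exists_median_count (H : nat -> bool) l h :
  (0 < count H (iota 0 l))%N -> (count H (iota 0 l) <= h.*2.+1)%N ->
  exists i, [/\ (i < l)%N, H i, (count H (iota 0 i) <= h)%N &
    (count (fun j => H (i.+1 + j)%N) (iota 0 (l - i.+1)) <= h)%N].
Proof.
set k := count H (iota 0 l) => k_gt0 k_le; set q := minn k.-1 h.
have exP : exists n, (q < count H (iota 0 n.+1))%N.
  exists l.-1; rewrite prednK; first by rewrite /q; lia.
  by case: l @k k_gt0 k_le {q}.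
case: (ex_minnP exP) => i q_lt min_i.
have count_i : (count H (iota 0 i) <= q)%N.
  case: i q_lt min_i => [|i] // _ min_i.
  by rewrite leqNgt; apply/negP => /min_i; lia.
move: q_lt; rewrite count_iotaS => q_lt.
have Hi : H i by case: (H i) q_lt; lia.
have lt_il : (i < l)%N.
  rewrite ltnNge; apply/negP => le_li.
  by move: count_i; rewrite -(subnKC le_li) count_iotaD /q -/k; lia.
exists i; split => //; first by rewrite /q in count_i; lia.
move: (count_iotaD H i.+1 (l - i.+1)); rewrite subnKC // count_iotaS Hi -/k.
by rewrite /q in count_i; lia.
Qed.

(* Spare entries of g can point at position L, beyond the steps of interest. *)
Definition hop_code h L (g : {ffun 'I_h -> 'I_L.+1}) (j : nat) : bool :=
  [exists k, (g k : nat) == j].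

Lemma hop_code_exists (H : nat -> bool) n h L : (n <= L)%N ->
  (count H (iota 0 n) <= h)%N ->
  exists g : {ffun 'I_h -> 'I_L.+1}, forall j, (j < n)%N -> hop_code g j = H j.
Proof.
move=> le_nL count_le; set s := [seq j <- iota 0 n | H j].
have size_s : (size s <= h)%N by rewrite size_filter.
have lt_s x : x \in s -> (x < n)%N.
  by rewrite mem_filter mem_iota => /and3P[_ _]; rewrite add0n.
have inordK_s k : nat_of_ord (inord (nth L s k) : 'I_L.+1) = nth L s k.
  apply: inordK; case: (ltnP k (size s)) => [/(mem_nth L)/lt_s|?]; last first.
    by rewrite nth_default.
  by move=> lt; rewrite ltnS (leq_trans (ltnW lt)).
exists [ffun k : 'I_h => inord (nth L s k)] => j lt_jn; apply/idP/idP.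
- case/existsP=> k; rewrite ffunE inordK_s => /eqP s_k.
  case: (ltnP k (size s)) => [/(mem_nth L)|le_sk].
    by rewrite s_k mem_filter => /andP[].
  by move: s_k; rewrite nth_default //; lia.
- move=> Hj; have s_j : j \in s by rewrite mem_filter Hj mem_iota; lia.
  have lt_idx : (index j s < h)%N by rewrite (leq_trans _ size_s) // index_mem.
  by apply/existsP; exists (Ordinal lt_idx); rewrite ffunE inordK_s nth_index.
Qed.

Section PathHops.
Variables (N : nat) (sched : seq {perm 'I_N}) (a b : 'I_N) (t : int)
  (P : vpath N).
Hypothesis P_ab : paths_from_to sched a b t P.

Local Notation hops := (is_hop sched P).
Local Notation walk := (walk_perm sched).

Let P_path : is_path sched P. Proof. by case/and3P: P_ab. Qed.
Let P_start : P.1 = (a, t). Proof. by case/and3P: P_ab => _ /eqP. Qed.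

Lemma path_last_walk : b = walk t (size P.2) hops a.
Proof.
case/and3P: P_ab => _ _ /eqP <-.
by rewrite path_lastE (path_nth_walk P_path P_start).
Qed.

Lemma walk_hopS i :
  hops i -> walk t i.+1 hops a = pi_t sched (t + i%:Z) (walk t i hops a).
Proof. by move=> hop_i; rewrite walk_permS hop_i. Qed.

Lemma hop_edge_in_path i : hops i ->
  ((walk t i hops a, t + i%:Z),
   (pi_t sched (t + i%:Z) (walk t i hops a), t + i%:Z + 1)) \in path_edges P.
Proof.
move=> hop_i; have lt_i : (i < size P.2)%N by case/andP: hop_i.
have := mem_path_edges_nth lt_i.
rewrite !(path_nth_walk P_path P_start) ?walk_hopS //; last lia.
by rewrite -addn1 PoszD addrA.
Qed.

Lemma count_hops_gt0 : a != b -> (0 < count hops (iota 0 (size P.2)))%N.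
Proof.
rewrite path_last_walk lt0n; apply: contra => /eqP count0.
rewrite -[size P.2]add0n walk_perm_idle /= ?perm1 // => j lt_j.
apply/negP => hop_j; move: count0; apply/eqP; rewrite -lt0n -has_count.
by apply/hasP; exists j => //; rewrite mem_iota; lia.
Qed.

Variables (h L : nat).
Hypothesis P_short : (size P.2 <= L)%N.

Lemma median_hop : a != b -> (count hops (iota 0 (size P.2)) <= h.*2.+1)%N ->
  exists i, [/\ hops i,
    exists g : {ffun 'I_h -> 'I_L.+1}, walk t i (hop_code g) = walk t i hops &
    exists g : {ffun 'I_h -> 'I_L.+1},
      b = walk (t + i%:Z + 1) L (hop_code g) (pi_t sched (t + i%:Z) (walk t i hops a))].
Proof.
move=> neq_ab count_le; set l := size P.2.
have [i [lt_il hop_i before after]] :=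
  exists_median_count (count_hops_gt0 neq_ab) count_le.
exists i; split => //.
  have [g codeP] := hop_code_exists (ltnW (leq_trans lt_il P_short)) before.
  by exists g; apply: eq_walk_perm.
set m := (l - i.+1)%N; have le_mL : (m <= L)%N by rewrite /m; lia.
pose H j := hops (i.+1 + j)%N && (j < m)%N.
have count_H : (count H (iota 0 L) <= h)%N.
  rewrite -(subnKC le_mL) count_iotaD (@eq_in_count _ _ (fun j => hops (i.+1 + j)%N)).
    rewrite [X in (_ + X)%N](_ : _ = 0%N) ?addn0 //.
    apply/eqP; rewrite -leqn0 leqNgt -has_count.
    by apply/hasP => -[j _]; rewrite /H; lia.
  by move=> j; rewrite mem_iota /H add0n => /andP[_ ->]; rewrite andbT.
have [g codeP] := hop_code_exists (leqnn L) count_H; exists g.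
rewrite path_last_walk -/l (_ : l = i.+1 + m)%N; last by rewrite /m; lia.
rewrite walk_permD walk_hopS // -addn1 PoszD addrA.
rewrite (@eq_walk_perm _ _ _ _ _ H); last first.
  by move=> j lt_jm; rewrite /H lt_jm andbT addn1.
rewrite -(@walk_perm_idle _ _ _ _ (L - m)); last by move=> j; rewrite /H; lia.
by rewrite subnKC // (@eq_walk_perm _ _ _ _ _ (hop_code g)) // => j /codeP.
Qed.

End PathHops.

Section MixedDemand.
Variables (R : realType) (N : nat) (r lam : R).
Hypotheses (r_gt0 : 0 < r) (lam_ge0 : 0 <= lam) (lam_le1 : lam <= 1).
Hypothesis N_gt0 : (0 < N)%N.

Definition mixed_demand (A B : int -> {set 'I_N}) (m : nat)
    (t : int) (a b : 'I_N) : R :=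
  lam * r / N%:R + (1 - lam) * r / m%:R * ((a \in A t) && (b \in B t))%:R.

Lemma sum_indicator_le (B : {set 'I_N}) (c : bool) :
  \sum_(b < N) ((c && (b \in B))%:R : R) <= #|B|%:R.
Proof.
rewrite -sum1_card natr_sum [X in _ <= X]big_mkcond /=.
by apply: ler_sum => b _; case: c; case: (b \in B).
Qed.

Lemma mixed_demand_ge (A B : int -> {set 'I_N}) m t a b :
  lam * r / N%:R <= mixed_demand A B m t a b.
Proof. by rewrite lerDl !mulr_ge0 ?subr_ge0 ?invr_ge0 ?ler0n // ltW. Qed.

Lemma mixed_demand_le (A B : int -> {set 'I_N}) m : (0 < m)%N ->
  (forall t, #|A t| <= m)%N -> (forall t, #|B t| <= m)%N ->
  demand_le (mixed_demand A B m) r.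
Proof.
move=> m_gt0 card_A card_B.
have uniform : \sum_(b < N) lam * r / N%:R = lam * r.
  by rewrite sumr_const card_ord -[_ *+ N]mulr_natr divfK // pnatr_eq0 -lt0n.
have rect (X : {set 'I_N}) c : (#|X| <= m)%N ->
    \sum_(x < N) (1 - lam) * r / m%:R * (c && (x \in X))%:R <= (1 - lam) * r.
  move=> card_X; rewrite -mulr_sumr -mulrA ler_piMr ?mulr_ge0 ?subr_ge0 ?(ltW r_gt0) //.
  rewrite ler_pdivrMl ?ltr0n // mulr1; apply: le_trans (sum_indicator_le X c) _.
  by rewrite ler_nat.
have r_split : lam * r + (1 - lam) * r = r by rewrite -mulrDl addrC subrK mul1r.
split=> [t a b|t a|t b].
- apply: le_trans (mixed_demand_ge _ _ _ _ _ _).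
  by rewrite divr_ge0 ?mulr_ge0 // ltW.
- by rewrite big_split /= uniform -[X in _ <= X]r_split lerD2l rect.
- rewrite big_split /= uniform -[X in _ <= X]r_split lerD2l.
  under eq_bigr do rewrite andbC.
  exact: rect.
Qed.

End MixedDemand.

Lemma sum_le_inj (X Y : finType) (Pr : pred X) (phi : X -> Y) (R : realDomainType)
    (f : Y -> R) :
  injective phi -> (forall y, 0 <= f y) -> \sum_(x | Pr x) f (phi x) <= \sum_y f y.
Proof.
move=> phi_inj f_ge0.
rewrite (eq_bigl (mem [set x | Pr x])); last by move=> x; rewrite /= inE.
rewrite -(big_imset f (in2W phi_inj)) /=.
by rewrite [X in _ <= X](bigID (mem (phi @: [set x | Pr x]))) lerDl sumr_ge0.
Qed.

Section WindowDemands.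
Variables (R : realType) (N : nat) (sched : seq {perm 'I_N}) (r lam : R).
Variables (h L W : nat).
Hypotheses (r_gt0 : 0 < r) (lam_ge0 : 0 <= lam) (lam_le1 : lam <= 1).
Hypothesis N_gt0 : (0 < N)%N.

Let uniform_ge0 : 0 <= lam * r / N%:R.
Proof. by rewrite divr_ge0 ?mulr_ge0 // ltW. Qed.

Local Notation window := ('I_N * 'I_(W + L))%type.
Local Notation code := {ffun 'I_h -> 'I_L.+1}.

Definition window_edge (p : window) : vertex N * vertex N :=
  ((p.1, (p.2 : nat)%:Z), (pi_t sched (p.2 : nat)%:Z p.1, (p.2 : nat)%:Z + 1)).

Definition edge_paths (p : window) : set (vpath N) :=
  [set P | is_path sched P /\ window_edge p \in path_edges P].

(* Meant for 0 <= t <= p.2: the walk runs from time t to the tail of p. *)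
Definition sources (p : window) (t : int) : {set 'I_N} :=
  [set (walk_perm sched t (p.2 - `|t|) (hop_code g))^-1%g p.1 | g : code].

Definition targets (p : window) : {set 'I_N} :=
  [set walk_perm sched ((p.2 : nat)%:Z + 1) L (hop_code g)
         (pi_t sched (p.2 : nat)%:Z p.1) | g : code].

Definition edge_demand (p : window) : int -> 'I_N -> 'I_N -> R :=
  mixed_demand r lam (sources p) (fun=> targets p) (L.+1 ^ h).

Lemma card_codes_image (T : finType) (f : code -> T) :
  (#|[set f g | g : code]| <= L.+1 ^ h)%N.
Proof. by apply: leq_trans (leq_imset_card _ _) _; rewrite card_ffun !card_ord. Qed.

Lemma edge_demand_le p : demand_le (edge_demand p) r.
Proof.
by apply: mixed_demand_le; rewrite ?expn_gt0 // => t; apply: card_codes_image.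
Qed.

Definition min_path_demand : R :=
  Num.min (lam * r * (h.*2.+2)%:R / N%:R)
          (lam * r / N%:R + (1 - lam) * r / (L.+1 ^ h)%:R).

Lemma min_path_demand_ge0 : 0 <= min_path_demand.
Proof.
rewrite le_min mulrAC mulr_ge0 ?ler0n //=.
by rewrite addr_ge0 // divr_ge0 ?ler0n // mulr_ge0 ?subr_ge0 // ltW.
Qed.

Section RoutedPath.
Variables (a b : 'I_N) (t : 'I_W) (P : vpath N).
Hypothesis P_ab : paths_from_to sched a b (t : nat)%:Z P.
Hypothesis P_short : (size P.2 <= L)%N.
Hypothesis neq_ab : a != b.

Local Notation hops := (is_hop sched P).
Local Notation demand_on p :=
  (if P \in edge_paths p then edge_demand p (t : nat)%:Z a b else 0).

Let lt_hop_time (i : 'I_(size P.2)) : (t + i < W + L)%N.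
Proof. by have := ltn_ord i; have := ltn_ord t; lia. Qed.

Definition hop_window (i : 'I_(size P.2)) : window :=
  (walk_perm sched (t : nat)%:Z i hops a, Ordinal (lt_hop_time i)).

Lemma hop_window_inj : injective hop_window.
Proof.
move=> i j /(congr1 (fun p : window => nat_of_ord p.2)) /= /eqP.
by rewrite eqn_add2l => /eqP /val_inj.
Qed.

Lemma mem_edge_paths_hop (i : 'I_(size P.2)) :
  hops i -> P \in edge_paths (hop_window i).
Proof.
move=> hop_i; apply/mem_set; split; first by case/and3P: P_ab.
by have := hop_edge_in_path P_ab hop_i; rewrite /window_edge /= PoszD.
Qed.

Lemma sum_hop_demands_le :
  \sum_(i < size P.2 | hops i) edge_demand (hop_window i) (t : nat)%:Z a b <=
  \sum_(p : window) demand_on p.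
Proof.
have demand_ge0 p : 0 <= demand_on p.
  case: ifP => // _.
  exact: le_trans uniform_ge0 (mixed_demand_ge r_gt0 lam_le1 _ _ _ _ _ _).
apply: le_trans (sum_le_inj _ hop_window_inj demand_ge0).
by apply: ler_sum => i /mem_edge_paths_hop ->.
Qed.

Lemma path_demand_ge : min_path_demand <= \sum_(p : window) demand_on p.
Proof.
apply: le_trans sum_hop_demands_le.
have demand_ge i : lam * r / N%:R <= edge_demand (hop_window i) (t : nat)%:Z a b.
  exact: mixed_demand_ge r_gt0 lam_le1 _ _ _ _ _ _.
case: (leqP (count hops (iota 0 (size P.2))) h.*2.+1) => count_hops.
- have [i [hop_i [g1 walk_g1] [g2 b_g2]]] := median_hop P_ab P_short neq_ab count_hops.
  have lt_i : (i < size P.2)%N by case/andP: hop_i.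
  rewrite (bigD1 (Ordinal lt_i)) //= /edge_demand /mixed_demand.
  have -> : a \in sources (hop_window (Ordinal lt_i)) (t : nat)%:Z.
    by apply/imsetP; exists g1; rewrite //= addKn walk_g1 permK.
  have -> /= : b \in targets (hop_window (Ordinal lt_i)) by apply/imsetP; exists g2.
  rewrite mulr1 /min_path_demand ge_min -addrA lerD2l lerDl sumr_ge0 ?orbT // => j _.
  exact: le_trans uniform_ge0 (demand_ge j).
- apply: le_trans (ler_sum _ (fun i _ => demand_ge i)).
  rewrite -(big_mkord hops (fun _ => lam * r / N%:R)) big_const_seq iter_addr_0.
  rewrite /index_iota subn0 /min_path_demand ge_min mulrAC mulr_natr.
  by rewrite ler_wpMn2l ?uniform_ge0.
Qed.

End RoutedPath.

End WindowDemands.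

Section EsumFacts.
Variable R : realType.
Local Open Scope classical_set_scope.
Local Open Scope ereal_scope.

Lemma ge0_esumZl (T : choiceType) (S : set T) (c : R) (f : T -> \bar R) :
  (0 <= c)%R -> (forall x, 0 <= f x) ->
  \esum_(i in S) (c%:E * f i) = c%:E * \esum_(i in S) f i.
Proof.
move=> c_ge0 f_ge0; rewrite /esum -ereal_supZl //; last first.
  by apply/set0P; exists 0; exists set0; [exact: fsets_set0|rewrite fsbig_set0].
congr ereal_sup; apply/seteqP; split=> y.
- move=> [A A_fin <-]; exists (\sum_(i \in A) f i); first by exists A.
  by rewrite ge0_mule_fsumr.
- by move=> [z [A A_fin <-] <-]; exists A => //; rewrite ge0_mule_fsumr.
Qed.

Lemma sum_le_esum_inj (T : choiceType) (X : finType) (g : X -> T) (F : T -> \bar R) :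
  injective g -> (forall y, 0 <= F y) ->
  \sum_(x : X) F (g x) <= \esum_(y in [set: T]) F y.
Proof.
move=> g_inj F_ge0.
have F_g x : F (g x) = \esum_(y in [set: T]) (if y \in [set g x] then F y else 0).
  by rewrite -esum_mkcond esum_set1.
rewrite (eq_bigr _ (fun x _ => F_g x)) -esum_sum; last by move=> y x _ _; case: ifP.
apply: le_esum => y _; case: (pselect (exists x, y = g x)) => [[x0 ->]|not_img].
- rewrite (bigD1 x0) //= ifT ?mem_set // big1 ?adde0 // => x neq_x.
  by rewrite ifF //; apply/negP => /set_mem /= /g_inj eq_x; rewrite eq_x eqxx in neq_x.
- rewrite big1 // => x _; rewrite ifF //.
  by apply/negP => /set_mem /= ?; apply: not_img; exists x.
Qed.

Lemma sum_esum_sum_exchange (T : choiceType) (I J : finType) (S : I -> set T)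
    (F : I -> J -> T -> \bar R) : (forall i j P, 0 <= F i j P) ->
  \sum_(i : I) \esum_(P in S i) \sum_(j : J) F i j P =
  \sum_(j : J) \esum_(P in [set: T]) \sum_(i : I) (if P \in S i then F i j P else 0).
Proof.
move=> F_ge0.
have cond_ge0 i j P : 0 <= (if P \in S i then F i j P else 0) by case: ifP.
transitivity (\sum_(i : I) \esum_(P in [set: T])
    \sum_(j : J) (if P \in S i then F i j P else 0)).
  apply: eq_bigr => i _; rewrite esum_mkcond; apply: eq_esum => P _.
  by case: ifP => _ //; rewrite big1.
rewrite -esum_sum; last by move=> P i _ _; apply: sume_ge0.
under eq_esum do rewrite exchange_big.
by rewrite esum_sum // => P j _ _; apply: sume_ge0.
Qed.

End EsumFacts.

Section LoadCounting.
Variables (R : realType) (N : nat) (sched : seq {perm 'I_N})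
  (Rt : 'I_N -> 'I_N -> int -> vpath N -> R) (r lam : R) (h L W : nat).
Hypotheses (r_gt0 : 0 < r) (lam_ge0 : 0 <= lam) (lam_le1 : lam <= 1).
Hypothesis N_gt0 : (0 < N)%N.
Hypotheses (Rt_design : is_ORN_design sched Rt)
  (Rt_throughput : guarantees_throughput sched Rt r)
  (Rt_latency : latency_bounded_by Rt L).

Local Notation window := ('I_N * 'I_(W + L))%type.
Local Notation request := ('I_W * ('I_N * 'I_N))%type.
Local Notation demand p := (edge_demand sched r lam h (p : window)).
Local Notation flow p x P := ((demand p (x.1 : nat)%:Z x.2.1 x.2.2 *
                               Rt x.2.1 x.2.2 (x.1 : nat)%:Z P)%:E).
Local Notation cmin := (min_path_demand N r lam h L).

Let Rt_ge0 a b t P : 0 <= Rt a b t P.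
Proof. by case: Rt_design => _ ->. Qed.

Let demand_ge0 p t a b : 0 <= demand p t a b.
Proof. by case: (edge_demand_le sched h r_gt0 lam_ge0 lam_le1 N_gt0 p) => ->. Qed.

Lemma window_load_le1 p :
  (load sched (induced_flow Rt (demand p)) (window_edge sched p) <= 1)%E.
Proof.
apply: (Rt_throughput (edge_demand_le sched h r_gt0 lam_ge0 lam_le1 N_gt0 p)).
by rewrite /is_phys /= !eqxx.
Qed.

Lemma window_load_ge p :
  (\esum_(P in edge_paths sched p) \sum_(x : request) flow p x P <=
   load sched (induced_flow Rt (demand p)) (window_edge sched p))%E.
Proof.
rewrite /load /induced_flow; apply: le_esum => P _.
pose time (x : request) := ((x.1 : nat)%:Z, x.2).
have time_inj : injective time by move=> [i ab] [j cd] [/val_inj -> ->].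
apply: (sum_le_esum_inj
  (F := fun y => (demand p y.1 y.2.1 y.2.2 * Rt y.2.1 y.2.2 y.1 P)%:E) time_inj).
by move=> y; rewrite lee_fin mulr_ge0.
Qed.

Lemma request_flow_ge (x : request) :
  ((if x.2.1 != x.2.2 then cmin else 0)%:E <=
   \esum_(P in [set: vpath N])
     \sum_(p : window) (if P \in edge_paths sched p then flow p x P else 0))%E.
Proof.
case: x => t [a b] /=; set t' := (t : nat)%:Z.
have pointwise P : (((if a != b then cmin else 0) * Rt a b t' P)%:E <=
    \sum_(p : window) (if P \in edge_paths sched p then flow p (t, (a, b)) P else 0))%E.
  rewrite (eq_bigr (fun p => ((if P \in edge_paths sched p then demand p t' a b else 0)
      * Rt a b t' P)%:E)); last by move=> p _; case: ifP; rewrite ?mul0r.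
  rewrite sumEFin -mulr_suml lee_fin.
  have [->|Rt_neq0] := eqVneq (Rt a b t' P) 0; first by rewrite !mulr0.
  rewrite ler_wpM2r //; case: ifP => [neq_ab|_]; last first.
    by rewrite sumr_ge0 // => p _; case: ifP.
  have P_ab : paths_from_to sched a b t' P.
    by case: Rt_design => _ _ /(_ a b t' P Rt_neq0).
  have P_short : (size P.2 <= L)%N.
    by apply: (Rt_latency (a := a) (b := b) (t := t')); rewrite lt0r Rt_neq0 Rt_ge0.
  exact: path_demand_ge.
apply: le_trans (le_esum (fun P _ => pointwise P)).
under eq_esum do rewrite EFinM.
rewrite ge0_esumZl => [|//|P]; last by rewrite lee_fin.
  by case: Rt_design => _ _ _ -> _; rewrite mule1.
by case: ifP => _ //; apply: min_path_demand_ge0.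
Qed.

Lemma sum_requests :
  \sum_(x : request) (if x.2.1 != x.2.2 then cmin else 0) = cmin *+ N.-1 *+ N *+ W.
Proof.
rewrite -(pair_bigA _ (fun i ab => if ab.1 != ab.2 then cmin else 0)) /=.
rewrite (eq_bigr (fun _ => cmin *+ N.-1 *+ N)) ?sumr_const ?card_ord // => i _.
rewrite -(pair_bigA _ (fun a b => if a != b then cmin else 0)) /=.
rewrite (eq_bigr (fun _ => cmin *+ N.-1)) ?sumr_const ?card_ord // => a _.
rewrite -big_mkcond /= (eq_bigl (predC1 a)) => [|b]; last by rewrite /= eq_sym.
by rewrite sumr_const cardC1 card_ord.
Qed.

Lemma window_count_le : cmin *+ N.-1 *+ N *+ W <= (N * (W + L))%:R.
Proof.
rewrite -sum_requests -lee_fin -sumEFin.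
apply: (@le_trans _ _ (\sum_(p : window) 1%E)%E); last first.
  by rewrite sumEFin sumr_const card_prod !card_ord.
apply: le_trans; first by apply: lee_sum => x _; apply: request_flow_ge.
rewrite -sum_esum_sum_exchange; last by move=> p x P; rewrite lee_fin mulr_ge0.
apply: lee_sum => p _; apply: le_trans (window_load_ge p) (window_load_le1 p).
Qed.

End LoadCounting.

Lemma latency_bound_gt0 (R : realType) N (sched : seq {perm 'I_N})
    (Rt : 'I_N -> 'I_N -> int -> vpath N -> R) L :
  (1 < N)%N -> is_ORN_design sched Rt -> latency_bounded_by Rt L -> (0 < L)%N.
Proof.
move=> N_gt1 [_ Rt_ge0 Rt_paths Rt_sum _] Rt_latency.
pose a : 'I_N := Ordinal (ltnW N_gt1); pose b : 'I_N := Ordinal N_gt1.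
have [[P Rt_P]|no_path] := pselect (exists P, Rt a b 0 P != 0); last first.
  have := Rt_sum a b 0; rewrite esum1 => [/(congr1 fine) /eqP|P _].
    by rewrite eq_sym oner_eq0.
  by apply/eqP/negPn/negP => Rt_P; apply: no_path; exists P.
have := Rt_latency _ _ _ _ (_ : 0 < Rt a b 0 P); rewrite lt0r Rt_P Rt_ge0 => /(_ isT).
apply: leq_trans; rewrite lt0n size_eq0; apply/negP => /eqP P_nil.
case/and3P: (Rt_paths _ _ _ _ Rt_P) => _ /eqP P_start.
by rewrite /path_last P_nil P_start.
Qed.

Section Dichotomy.
Variables (R : realType) (N : nat) (r lam : R) (h L K : nat).
Hypotheses (r_gt0 : 0 < r) (lam_ge0 : 0 <= lam) (lam_lt1 : lam < 1).
Hypotheses (N_gt1 : (1 < N)%N) (K_gt0 : (0 < K)%N).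

Local Notation theta := (lam * r * (h.*2.+2)%:R).
Local Notation cmin := (min_path_demand N r lam h L).

Lemma window_count_scaled (sched : seq {perm 'I_N})
    (Rt : 'I_N -> 'I_N -> int -> vpath N -> R) :
  is_ORN_design sched Rt -> guarantees_throughput sched Rt r ->
  latency_bounded_by Rt L -> cmin * (N%:R - 1) * K%:R <= K%:R + 1.
Proof.
move=> Rt_design Rt_throughput Rt_latency.
have L_gt0 := latency_bound_gt0 N_gt1 Rt_design Rt_latency.
have := window_count_le h (K * L) r_gt0 lam_ge0 (ltW lam_lt1) (ltnW N_gt1)
  Rt_design Rt_throughput Rt_latency.
rewrite -[_ *+ (K * L)%N]mulr_natr -[_ *+ N]mulr_natr -[_ *+ N.-1]mulr_natr.
have pred_N : (N.-1%:R : R) = N%:R - 1 by rewrite -subn1 natrB // ltnW.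
rewrite !natrM natrD natrM pred_N.
set n := (N%:R : R); set l := (L%:R : R) => count_le.
have nl_gt0 : 0 < n * l by rewrite mulr_gt0 ?ltr0n // ltnW.
rewrite -(ler_pM2r nl_gt0).
rewrite (_ : (K%:R + 1) * (n * l) = n * (K%:R * l + l)); last by ring.
by rewrite (_ : _ * (n * l) = cmin * (n - 1) * n * (K%:R * l)) //; ring.
Qed.

Lemma concentrated_rate_le :
  K%:R * theta < N%:R -> 2 < K%:R * (theta - 1) ->
  cmin * (N%:R - 1) * K%:R <= K%:R + 1 ->
  (1 - lam) * r / (L.+1 ^ h)%:R * (N%:R - 1) <= 2.
Proof.
set n := (N%:R : R); set k := (K%:R : R); set q := (1 - lam) * r / _.
have n_ge2 : 2 <= n by rewrite (ler_nat R 2).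
have k_ge1 : 1 <= k by rewrite (ler_nat R 1).
have u_ge0 : 0 <= lam * r / n by rewrite divr_ge0 ?mulr_ge0 ?ler0n // ltW.
move=> lt_kn lt_k2; rewrite /min_path_demand -/n -/q.
rewrite minEle; case: ifP => _.
- (* the uniform part cannot be the minimum, as K * theta < N *)
  have n_gt0 : 0 < n by lra.
  rewrite -(ler_pM2r n_gt0).
  rewrite (_ : theta / n * _ * _ * n = theta * (n - 1) * k); last first.
    by field; rewrite gt_eqF.
  nra.
- move=> small_sum; rewrite -(ler_pM2r (_ : 0 < k)); last by lra.
  have : 0 <= lam * r / n * (n - 1) * k by apply: mulr_ge0; [apply: mulr_ge0|]; lra.
  nra.
Qed.

Lemma network_size_le (sched : seq {perm 'I_N})
    (Rt : 'I_N -> 'I_N -> int -> vpath N -> R) :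
  is_ORN_design sched Rt -> guarantees_throughput sched Rt r ->
  latency_bounded_by Rt L ->
  K%:R * theta < N%:R -> 2 < K%:R * (theta - 1) ->
  (1 - lam) * r * N%:R <= 2 ^+ h.+2 * L%:R ^+ h.
Proof.
move=> Rt_design Rt_throughput Rt_latency lt_kn lt_k2.
have := concentrated_rate_le lt_kn lt_k2
  (window_count_scaled Rt_design Rt_throughput Rt_latency).
have L_gt0 := latency_bound_gt0 N_gt1 Rt_design Rt_latency.
have codes_le : ((L.+1 ^ h)%:R : R) <= 2 ^+ h * L%:R ^+ h.
  rewrite -!natrX -natrM -expnMn ler_nat.
  by case: (h) => [|h'] //; rewrite leq_exp2r //; lia.
have n_ge2 : (2 : R) <= N%:R by rewrite (ler_nat R 2).
set m := ((L.+1 ^ h)%:R : R); have m_gt0 : 0 < m by rewrite ltr0n expn_gt0.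
rewrite mulrAC ler_pdivrMr // => size_le.
have a_ge0 : 0 <= (1 - lam) * r by rewrite mulr_ge0 // ?subr_ge0 ltW.
rewrite !exprS mulrA; nra.
Qed.

End Dichotomy.

Section Rate.
Variables (R : realType) (r : R).
Hypotheses (r_gt0 : 0 < r) (r_le_half : r <= 2^-1).

Local Notation h := (h_of r).

Lemma h_of_bounds : [/\ (0 < h)%N, h%:R <= 1 / (2 * r) & 1 / (2 * r) < h%:R + 1].
Proof.
have inv_ge1 : 1 <= 1 / (2 * r).
  rewrite ler_pdivlMr ?mulr_gt0 // mul1r.
  by have := ler_pM2l (_ : 0 < 2) r (2^-1); rewrite mulfV // => ->.
by rewrite /h_of truncn_gt0 truncn_le (le_trans ler01) // natr1 truncnS_gt.
Qed.

Lemma Lstar_le N : (0 < N)%N -> Lstar r N <= 2 * h%:R * N%:R `^ (h%:R)^-1.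
Proof.
move=> N_gt0; have [h_gt0 h_le h_gt] := h_of_bounds.
have N_ge1 : (1 : R) <= N%:R by rewrite ler1n.
have h_pos : (0 : R) < h%:R by rewrite ltr0n.
rewrite /Lstar /eps_of; set s := (h%:R)^-1.
rewrite (_ : 2 * _ * _ = h%:R * (N%:R `^ s + N%:R `^ s)); last by ring.
rewrite ler_wpM2l ?ler0n // lerD //.
  by apply: ler_powR => //; rewrite lef_pV2 ?posrE ?addr_gt0 // lerDl.
apply: ge0_ler_powR;
  by rewrite ?nnegrE ?invr_ge0 ?ler0n ?mulr_ge0 ?ler_piMl ?ler0n //; lra.
Qed.

Lemma mixing_parameters : exists lam K,
  [/\ 0 <= lam, lam < 1, (0 < K)%N & 2 < K%:R * (lam * r * (h.*2.+2)%:R - 1)].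
Proof.
have [_ _ h_gt] := h_of_bounds.
set rho := r * (h.*2.+2)%:R.
have rho_gt1 : 1 < rho.
  move: h_gt; rewrite ltr_pdivrMr ?mulr_gt0 //.
  by rewrite /rho -doubleS -mul2n natrM -addn1 natrD; lra.
exists ((1 + rho) / (2 * rho)), (Num.truncn (2 / ((rho - 1) / 2))).+1; split => //.
- by rewrite divr_ge0 //; lra.
- by rewrite ltr_pdivrMr; lra.
rewrite -mulrA -/rho (_ : _ * rho - 1 = (rho - 1) / 2); last by field; lra.
by rewrite -ltr_pdivrMr ?truncnS_gt //; lra.
Qed.

Lemma latency_pow_lower_bound : exists2 kappa : R, 0 < kappa &
  forall N, (1 < N)%N -> forall (sched : seq {perm 'I_N})
    (Rt : 'I_N -> 'I_N -> int -> vpath N -> R),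
  is_ORN_design sched Rt -> guarantees_throughput sched Rt r ->
  forall L, latency_bounded_by Rt L -> kappa * N%:R <= L%:R ^+ h.
Proof.
have [lam [K [lam_ge0 lam_lt1 K_gt0 lt_K2]]] := mixing_parameters.
set N0 := (Num.truncn (K%:R * (lam * r * (h.*2.+2)%:R))).+1.
exists (Num.min ((1 - lam) * r / 2 ^+ h.+2) N0%:R^-1).
  by rewrite lt_min divr_gt0 ?invr_gt0 ?ltr0n ?exprn_gt0 ?mulr_gt0 ?subr_gt0.
move=> N N_gt1 sched Rt Rt_design Rt_throughput L Rt_latency.
have N_ge0 : (0 : R) <= N%:R := ler0n _ _.
case: (ltnP N N0) => [small|large].
- apply: le_trans (exprn_ege1 _ _); last first.
    by rewrite ler1n (latency_bound_gt0 N_gt1 Rt_design Rt_latency).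
  apply: le_trans (ler_wpM2r N_ge0 (_ : _ <= N0%:R^-1)) _.
    by rewrite ge_min lexx orbT.
  by rewrite ler_pdivrMl ?ltr0n // mulr1 ler_nat ltnW.
- apply: le_trans (ler_wpM2r N_ge0 (_ : _ <= (1 - lam) * r / 2 ^+ h.+2)) _.
    by rewrite ge_min lexx.
  rewrite mulrAC ler_pdivrMr ?exprn_gt0 // [X in _ <= X]mulrC.
  apply: (network_size_le r_gt0 lam_ge0 lam_lt1 N_gt1 K_gt0 Rt_design Rt_throughput
    Rt_latency _ lt_K2).
  by apply: lt_le_trans (truncnS_gt _) _; rewrite ler_nat.
Qed.

End Rate.

Lemma expr_powR_inv (R : realType) (x : R) n : 0 <= x -> (0 < n)%N ->
  (x ^+ n) `^ (n%:R)^-1 = x.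
Proof.
by move=> x_ge0 n_gt0; rewrite -powR_mulrn // -powRrM mulfV ?pnatr_eq0 -?lt0n // powRr1.
Qed.

Unset Implicit Arguments. Set Strict Implicit. Set Printing Implicit Defensive.

Theorem theorem3p2 (R : realType) (r : R) :
  0 < r -> r <= 2^-1 ->
  exists c : R, 0 < c /\
    forall (N : nat), (2 <= N)%N ->
    forall (sched : seq {perm 'I_N})
           (Rt : 'I_N -> 'I_N -> int -> vpath N -> R),
      is_ORN_design sched Rt ->
      guarantees_throughput sched Rt r ->
      forall L : nat, latency_bounded_by Rt L ->
        c * Lstar r N <= L%:R.
Proof.
move=> r_gt0 r_le_half.
have [h_gt0 _ _] := h_of_bounds r_gt0 r_le_half.
have [kappa kappa_gt0 size_le] := latency_pow_lower_bound r_gt0 r_le_half.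
set h := h_of r in h_gt0 size_le; set s := (h%:R : R)^-1.
have h_pos : (0 : R) < h%:R by rewrite ltr0n.
exists (kappa `^ s / (2 * h%:R)); split; first by rewrite divr_gt0 ?powR_gt0 ?mulr_gt0.
move=> N N_ge2 sched Rt Rt_design Rt_throughput L Rt_latency.
apply: le_trans (ler_wpM2l _ (Lstar_le r_gt0 r_le_half (ltnW N_ge2))) _.
  by rewrite divr_ge0 ?powR_ge0 ?mulr_ge0 ?ler0n.
rewrite mulrA divfK ?mulf_neq0 ?gt_eqF // -powRM ?ler0n ?(ltW kappa_gt0) //.
rewrite -(expr_powR_inv (ler0n _ L) h_gt0).
apply: ge0_ler_powR; rewrite ?nnegrE ?invr_ge0 ?ler0n ?mulr_ge0 ?exprn_ge0 ?ler0n //.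
  exact: ltW.
exact: size_le N N_ge2 sched Rt Rt_design Rt_throughput L Rt_latency.
Qed.
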